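(* Let $\mathcal{A}\subseteq\{1,\dots,T,+\infty\}$ be a finite set of adoption cohorts (ordered with $+\infty$ largest), let $\pi_a>0$ for $a\in\mathcal{A}$, and let real numbers $Y_{a,t}$ ($a\in\mathcal{A}$, $t\in\{1,\dots,T\}$), vectors $\theta_a\in\mathbb{R}^r$ ($a\in\mathcal{A}$) and $\psi_t\in\mathbb{R}^r$ ($t\in\{1,\dots,T\}$) be given. Consider the weighted least squares problem $$\min_{\{\alpha_a,\beta_t,\phi_t,\nu_a,\tau_{a,k}\}}\ \sum_{a\in\mathcal{A}}\sum_{t=1}^T \pi_a\Big(Y_{a,t}-\alpha_a-\beta_t-\theta_a^\top\phi_t-\nu_a^\top\psi_t-\mathbf{1}\{a\le t\}\tau_{a,t-a}\Big)^2,$$ over $\alpha_a\in\mathbb{R}$, $\beta_t\in\mathbb{R}$, $\phi_t\in\mathbb{R}^r$, $\nu_a\in\mathbb{R}^r$ and $\tau_{a,k}\in\mathbb{R}$ (one parameter for each $a\in\mathcal{A}$, $k\ge 0$ with $a+k\le T$), and denote by $\hat\tau^{OLS}_{a,k}$ the $\tau_{a,k}$-component of a minimizer. Suppose there exist periods $a^\star\ge t^\star$ such that the set $\{\theta_j: j\in\mathcal{A}, j>a^\star\}$ and the set $\{\psi_l: l<t^\star\}$ each affinely span $\mathbb{R}^r$. Then for every cohort $a$ and horizon $k\ge0$ with $t^\star\le a+k\le a^\star$, $\hat\tau^{OLS}_{a,k}$ is uniquely determined (the same for all minimizers), and it equals the value produced by the following sequential algorithm (Sequential OLS): for $k=0,1,\dots,a^\star-t^\star$,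 and within each $k$ for $a=t^\star,\dots,a^\star-k$ in increasing order (with $a\in\mathcal{A}$), do: (i) compute $$\tilde\omega^{(a)}:=\arg\min_{\omega}\sum_{j>a}\frac{\omega_j^2}{\pi_j}\ \text{ s.t. }\ \sum_{j>a}\omega_j=1,\ \sum_{j>a}\theta_j\omega_j=\theta_a,$$ $$\tilde\lambda^{(a,k)}:=\arg\min_{\lambda}\sum_{l<a+k}\lambda_l^2\ \text{ s.t. }\ \sum_{l<a+k}\lambda_l=1,\ \sum_{l<a+k}\lambda_l\psi_l=\psi_{a+k},$$ where $j$ ranges over cohorts in $\mathcal{A}$ with $j>a$ and $l$ over periods in $\{1,\dots,T\}$ with $l<a+k$; (ii) set $$\hat\tau^{OLS}_{a,k}:=\Big(Y_{a,a+k}-\sum_{j>a}\tilde\omega^{(a)}_jY_{j,a+k}\Big)-\sum_{l<a+k}\tilde\lambda^{(a,k)}_l\Big(Y_{a,l}-\sum_{j>a}\tilde\omega^{(a)}_jY_{j,l}\Big);$$ (iii) overwrite $Y_{a,a+k}:=Y_{a,a+k}-\hat\tau^{OLS}_{a,k}$ and use the updated data in all subsequent iterations.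
   Context: Here $\mathcal{A}$ plays the role of the set of observed adoption times (cohorts), $a=+\infty$ denoting the never-treated cohort, $Y_{a,t}$ is the average outcome of units in cohort $a$ in period $t$, and $\pi_a=n_a/n$ is the share of units in cohort $a$. The vectors $\theta_a$ (cohort factor loadings) and $\psi_t$ (time factors) are treated as known regressors (''oracle''). In the minimization, $\tau_{a,t-a}$ is the treatment effect of cohort $a$ at horizon $t-a$, present only when $a\le t$. *)

From Stdlib Require Import ClassicalEpsilon.
From mathcomp Require Import all_boot all_order all_algebra.
Set Implicit Arguments. Unset Strict Implicit. Unset Printing Implicit Defensive.
Import Order.TTheory GRing.Theory Num.Theory.
Local Open Scope ring_scope.

(* Encoding: periods are 1..T (nat); cohorts are nat values in 1..T.+1,
   where the value T.+1 encodes the never-treated cohort +oo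
   (it is larger than every period, so 1{a <= t} = false for t <= T). *)

Definition dotv (R : realFieldType) (r : nat) (u v : 'rV[R]_r) : R :=
  \sum_(i < r) u 0 i * v 0 i.

Definition later_cohorts (A : seq nat) (c : nat) : seq nat :=
  [seq j <- A | (c < j)%N].

Definition periods_before (T p : nat) : seq nat :=
  [seq l <- iota 1 T | (l < p)%N].

Definition affinely_spans (R : realFieldType) (r : nat) (I : seq nat)
  (v : nat -> 'rV[R]_r) : Prop :=
  forall x : 'rV[R]_r, exists w : nat -> R,
    \sum_(i <- I) w i = 1 /\ \sum_(i <- I) w i *: v i = x.

Definition omega_feasible (R : realFieldType) (r : nat) (A : seq nat)
  (theta : nat -> 'rV[R]_r) (a : nat) (w : nat -> R) : Prop :=
  \sum_(j <- later_cohorts A a) w j = 1 /\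
  \sum_(j <- later_cohorts A a) w j *: theta j = theta a.

Definition is_omega_tilde (R : realFieldType) (r : nat) (A : seq nat)
  (pi : nat -> R) (theta : nat -> 'rV[R]_r) (a : nat) (w : nat -> R) : Prop :=
  omega_feasible A theta a w /\
  forall w' : nat -> R, omega_feasible A theta a w' ->
    \sum_(j <- later_cohorts A a) w j ^+ 2 / pi j <=
    \sum_(j <- later_cohorts A a) w' j ^+ 2 / pi j.

Definition omega_tilde (R : realFieldType) (r : nat) (A : seq nat)
  (pi : nat -> R) (theta : nat -> 'rV[R]_r) (a : nat) : nat -> R :=
  epsilon (inhabits (fun _ : nat => (0 : R))) (is_omega_tilde A pi theta a).

(* p plays the role of a + k *)
Definition lambda_feasible (R : realFieldType) (r : nat) (T : nat)
  (psi : nat -> 'rV[R]_r) (p : nat) (lam : nat -> R) : Prop :=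
  \sum_(l <- periods_before T p) lam l = 1 /\
  \sum_(l <- periods_before T p) lam l *: psi l = psi p.

Definition is_lambda_tilde (R : realFieldType) (r : nat) (T : nat)
  (psi : nat -> 'rV[R]_r) (p : nat) (lam : nat -> R) : Prop :=
  lambda_feasible T psi p lam /\
  forall lam' : nat -> R, lambda_feasible T psi p lam' ->
    \sum_(l <- periods_before T p) lam l ^+ 2 <=
    \sum_(l <- periods_before T p) lam' l ^+ 2.

Definition lambda_tilde (R : realFieldType) (r : nat) (T : nat)
  (psi : nat -> 'rV[R]_r) (p : nat) : nat -> R :=
  epsilon (inhabits (fun _ : nat => (0 : R))) (is_lambda_tilde T psi p).

Definition seq_ols_step (R : realFieldType) (r : nat) (A : seq nat) (T : nat)
  (pi : nat -> R) (theta psi : nat -> 'rV[R]_r)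
  (st : (nat -> nat -> R) * (nat -> nat -> R)) (ak : nat * nat)
  : (nat -> nat -> R) * (nat -> nat -> R) :=
  let Y := st.1 in let tau := st.2 in
  let a := ak.1 in let k := ak.2 in
  let w := omega_tilde A pi theta a in
  let lam := lambda_tilde T psi (a + k) in
  let that :=
    (Y a (a + k) - \sum_(j <- later_cohorts A a) w j * Y j (a + k))
    - \sum_(l <- periods_before T (a + k))
        lam l * (Y a l - \sum_(j <- later_cohorts A a) w j * Y j l) in
  (fun b s => if (b == a) && (s == a + k)%N then Y b s - that else Y b s,
   fun b m => if (b == a) && (m == k) then that else tau b m).

Definition seq_ols_order (A : seq nat) (tstar astar : nat) : seq (nat * nat) :=
  flatten [seq [seq (a, k) | a <- [seq a <- iota tstar (astar - k - tstar).+1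
                                   | a \in A]]
          | k <- iota 0 (astar - tstar).+1].

Definition seq_ols (R : realFieldType) (r : nat) (A : seq nat) (T : nat)
  (pi : nat -> R) (Y : nat -> nat -> R) (theta psi : nat -> 'rV[R]_r)
  (tstar astar : nat) : nat -> nat -> R :=
  (foldl (seq_ols_step A T pi theta psi) (Y, fun _ _ => 0)
         (seq_ols_order A tstar astar)).2.

Definition ols_obj (R : realFieldType) (r : nat) (A : seq nat) (T : nat)
  (pi : nat -> R) (Y : nat -> nat -> R) (theta psi : nat -> 'rV[R]_r)
  (al be : nat -> R) (ph nu : nat -> 'rV[R]_r) (tau : nat -> nat -> R) : R :=
  \sum_(a <- A) \sum_(1 <= t < T.+1)
     pi a * (Y a t - al a - be t - dotv (theta a) (ph t) - dotv (nu a) (psi t)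
             - ((a <= t)%N)%:R * tau a (t - a)%N) ^+ 2.

Definition is_ols_minimizer (R : realFieldType) (r : nat) (A : seq nat) (T : nat)
  (pi : nat -> R) (Y : nat -> nat -> R) (theta psi : nat -> 'rV[R]_r)
  (al be : nat -> R) (ph nu : nat -> 'rV[R]_r) (tau : nat -> nat -> R) : Prop :=
  forall (al' be' : nat -> R) (ph' nu' : nat -> 'rV[R]_r) (tau' : nat -> nat -> R),
    ols_obj A T pi Y theta psi al be ph nu tau
    <= ols_obj A T pi Y theta psi al' be' ph' nu' tau'.

(* Every minimizer satisfies the normal equations of the least squares
   problem: its residuals vanish on the treated cells, are orthogonal within
   each cohort to the affine functions of psi_t, and within each period to the
   pi-weighted affine functions of theta_a.  The minimum-norm weights have
   exactly this dual form, omega~_j = pi_j (c + theta_j.d) and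
   lambda~_l = c' + psi_l.d', so the double-difference contrast of step (ii)
   annihilates the residuals; since the weights reproduce theta_a and
   psi_(a+k), it also annihilates the fixed effects.  Applied to the data it
   therefore returns the sum of the treatment effects of the cells it reads,
   and in the order of the algorithm all of them but tau_(a,k) have already
   been subtracted.  Over any ordered field a minimizer exists, since the
   normal equations of least squares onto a subspace are solvable. *)

From Stdlib Require Import ClassicalEpsilon Classical.
From mathcomp Require Import all_boot all_order all_algebra.
From mathcomp Require Import ring lra zify.
Set Implicit Arguments. Unset Strict Implicit. Unset Printing Implicit Defensive.
Import Order.TTheory GRing.Theory Num.Theory.
Local Open Scope ring_scope.

Section DotProduct.
Variables (R : realFieldType) (r : nat).
Implicit Types u v w : 'rV[R]_r.

Lemma dotvC u v : dotv u v = dotv v u.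
Proof. by apply: eq_bigr => i _; rewrite mulrC. Qed.

Lemma dotvDl u v w : dotv (u + v) w = dotv u w + dotv v w.
Proof. by rewrite /dotv -big_split; apply: eq_bigr => i _; rewrite mxE mulrDl. Qed.

Lemma dotvZl c u v : dotv (c *: u) v = c * dotv u v.
Proof. by rewrite /dotv mulr_sumr; apply: eq_bigr => i _; rewrite mxE mulrA. Qed.

Lemma dotv0l v : dotv 0 v = 0.
Proof. by rewrite /dotv big1 // => i _; rewrite mxE mul0r. Qed.

Lemma dotvNl u v : dotv (- u) v = - dotv u v.
Proof. by rewrite -scaleN1r dotvZl mulN1r. Qed.

Lemma dotvDr u v w : dotv u (v + w) = dotv u v + dotv u w.
Proof. by rewrite dotvC dotvDl !(dotvC u). Qed.

Lemma dotvZr c u v : dotv u (c *: v) = c * dotv u v.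
Proof. by rewrite dotvC dotvZl dotvC. Qed.

Lemma dotv0r u : dotv u 0 = 0.
Proof. by rewrite dotvC dotv0l. Qed.

Lemma dotv_suml (I : Type) (s : seq I) (c : I -> R) (x : I -> 'rV[R]_r) u :
  dotv (\sum_(j <- s) c j *: x j) u = \sum_(j <- s) c j * dotv (x j) u.
Proof. by elim/big_rec2: _ => [|j y z _ <-]; rewrite ?dotv0l // dotvDl dotvZl. Qed.

Lemma dotv_sumr (I : Type) (s : seq I) (c : I -> R) (x : I -> 'rV[R]_r) u :
  dotv u (\sum_(j <- s) c j *: x j) = \sum_(j <- s) c j * dotv u (x j).
Proof. by rewrite dotvC dotv_suml; apply: eq_bigr => j _; rewrite dotvC. Qed.

Lemma dotvv_eq0 u : dotv u u = 0 -> u = 0.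
Proof.
move=> uu0; apply/rowP => i; rewrite mxE.
have /eqP := @psumr_eq0P _ _ _ _ (fun j _ => sqr_ge0 (u 0 j)) uu0 i isT.
by rewrite mulf_eq0 orbb => /eqP.
Qed.

End DotProduct.

Lemma affinely_spans_sub (R : realFieldType) r (S1 S2 : seq nat)
    (v : nat -> 'rV[R]_r) :
  uniq S1 -> uniq S2 -> {subset S1 <= S2} ->
  affinely_spans S1 v -> affinely_spans S2 v.
Proof.
move=> uS1 uS2 S12 S1v x; have [w [w1 wx]] := S1v x.
exists (fun j => if j \in S1 then w j else 0).
have S1E : perm_eq [seq j <- S2 | j \in S1] S1.
  apply: uniq_perm; rewrite ?filter_uniq // => j.
  by rewrite mem_filter andb_idr // => /S12.
split; first by rewrite -big_mkcond -big_filter (perm_big _ S1E).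
rewrite -wx -(perm_big _ S1E) big_filter [RHS]big_mkcond.
by apply: eq_bigr => j _; case: ifP; rewrite ?scale0r.
Qed.

Lemma affine_functional_eq0 (R : realFieldType) r (S : seq nat)
    (v : nat -> 'rV[R]_r) c d :
  affinely_spans S v -> {in S, forall j, c + dotv (v j) d = 0} ->
  c = 0 /\ d = 0.
Proof.
move=> Sv vanish.
have vanish_all y : c + dotv y d = 0.
  have [w [w1 <-]] := Sv y.
  rewrite dotv_suml -[c]mulr1 -w1 mulr_sumr -big_split big1_seq //= => j /= jS.
  by rewrite mulrC -mulrDr vanish ?mulr0.
have c0 : c = 0 by have := vanish_all 0; rewrite dotv0l addr0.
by split=> //; apply: dotvv_eq0; have := vanish_all d; rewrite c0 add0r.
Qed.

Section MinNormWeights.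
Variables (R : realFieldType) (r : nat) (S : seq nat) (p : nat -> R).
Variable v : nat -> 'rV[R]_r.

Definition affine_weights (x : 'rV[R]_r) (w : nat -> R) : Prop :=
  \sum_(j <- S) w j = 1 /\ \sum_(j <- S) w j *: v j = x.

Definition weight_cost (w : nat -> R) : R := \sum_(j <- S) w j ^+ 2 / p j.

Definition is_min_weights (x : 'rV[R]_r) (w : nat -> R) : Prop :=
  affine_weights x w /\
  forall w', affine_weights x w' -> weight_cost w <= weight_cost w'.

(* The form forced by the Lagrange conditions of the min-norm problem. *)
Definition dual_weights (c : R) (d : 'rV[R]_r) (j : nat) : R :=
  p j * (c + dotv (v j) d).

Hypothesis p_gt0 : {in S, forall j, 0 < p j}.
Hypothesis S_spans : affinely_spans S v.

Lemma weight_cost_ge0 w : 0 <= weight_cost w.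
Proof.
rewrite /weight_cost big_seq sumr_ge0 // => j /p_gt0 pj.
by rewrite divr_ge0 ?sqr_ge0 ?ltW.
Qed.

Lemma weight_cost_eq0 w : weight_cost w = 0 -> {in S, forall j, w j = 0}.
Proof.
move=> /eqP; rewrite /weight_cost big_seq psumr_eq0 => [/allP w0 j jS|j /p_gt0 pj].
  have /implyP/(_ jS) := w0 j jS; rewrite mulf_eq0 invr_eq0 => /orP[|/eqP pj0].
    by rewrite sqrf_eq0 => /eqP.
  by have := p_gt0 jS; rewrite pj0 ltxx.
by rewrite divr_ge0 ?sqr_ge0 ?ltW.
Qed.

Definition homog (j : nat) : 'rV[R]_(1 + r) := row_mx (const_mx 1) (v j).

Lemma homog_coord j (z : 'rV[R]_(1 + r)) :
  (z *m (homog j)^T) 0 0 = z 0 (lshift r 0) + dotv (v j) (rsubmx z).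
Proof.
rewrite mxE big_split_ord /= big_ord1 [X in _ * X]mxE row_mxEl mxE mulr1.
congr (_ + _); apply: eq_bigr => i _.
by rewrite [X in _ * X]mxE row_mxEr mxE mulrC.
Qed.

Definition gram : 'M[R]_(1 + r) :=
  \sum_(j <- S) p j *: ((homog j)^T *m homog j).

Lemma gram_unit : gram \in unitmx.
Proof.
rewrite -row_free_unit; apply: inj_row_free => u uG0.
have quad_form : \sum_(j <- S) p j * ((u *m (homog j)^T) 0 0) ^+ 2 = 0.
  transitivity ((u *m gram *m u^T) 0 0); last by rewrite uG0 mul0mx mxE.
  rewrite mulmx_sumr mulmx_suml summxE; apply: eq_bigr => j _.
  rewrite -scalemxAr -scalemxAl [RHS]mxE !mulmxA -(mulmxA (u *m _)).
  rewrite [in RHS](mx11_scalar (u *m _)) mul_scalar_mx [in RHS]mxE expr2.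
  congr (_ * (_ * _)).
  by rewrite !mxE; apply: eq_bigr => i _; rewrite !mxE mulrC.
have vanish : {in S, forall j, u 0 (lshift r 0) + dotv (v j) (rsubmx u) = 0}.
  move=> j jS; rewrite -homog_coord; apply/eqP; rewrite -sqrf_eq0.
  move: quad_form => /eqP; rewrite big_seq psumr_eq0 => [/allP/(_ j jS)|i /p_gt0 pi].
    by rewrite jS mulf_eq0 gt_eqF ?p_gt0.
  by rewrite mulr_ge0 ?sqr_ge0 ?ltW.
have [u0 u1] := affine_functional_eq0 S_spans vanish.
rewrite -[u]hsubmxK u1; apply/rowP => k; rewrite !mxE.
by case: splitP => [i _|i _]; rewrite ?mxE // ord1 -u0.
Qed.

(* The constraints on [dual_weights c d] form the linear system
   [(c, d) *m gram = (1, x)], whose matrix is invertible. *)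
Lemma dual_weights_exist x : exists c d, affine_weights x (dual_weights c d).
Proof.
pose target : 'rV[R]_(1 + r) := row_mx (const_mx 1) x.
pose z := target *m invmx gram.
have moment : \sum_(j <- S) (dual_weights (z 0 (lshift r 0)) (rsubmx z) j) *: homog j
              = target.
  rewrite -(mulmxKV gram_unit target) -/z mulmx_sumr; apply: eq_bigr => j _.
  rewrite /dual_weights -homog_coord -scalerA -scalemxAr mulmxA; congr (_ *: _).
  by rewrite -mul_scalar_mx -mx11_scalar.
exists (z 0 (lshift r 0)), (rsubmx z); split.
  have /(congr1 (fun M : 'rV[R]_(1 + r) => M 0 (lshift r 0))) := moment.
  rewrite summxE /target row_mxEl [const_mx _ _ _]mxE => <-.
  by apply: eq_bigr => j _; rewrite [RHS]mxE /homog row_mxEl [const_mx _ _ _]mxE mulr1.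
apply/rowP => i.
have /(congr1 (fun M : 'rV[R]_(1 + r) => M 0 (rshift 1 i))) := moment.
rewrite summxE /target row_mxEr => <-; rewrite summxE.
by apply: eq_bigr => j _; rewrite [RHS]mxE /homog row_mxEr mxE.
Qed.

Lemma weight_cost_pythagoras c d x w :
  affine_weights x (dual_weights c d) -> affine_weights x w ->
  weight_cost w = weight_cost (dual_weights c d)
                  + weight_cost (fun j => w j - dual_weights c d j).
Proof.
move=> [dw1 dwx] [w1 wx]; set dw := dual_weights c d in dw1 dwx *.
have cross : \sum_(j <- S) (w j - dw j) * (c + dotv (v j) d) = 0.
  have -> : \sum_(j <- S) (w j - dw j) * (c + dotv (v j) d) =
      c * (\sum_(j <- S) w j - \sum_(j <- S) dw j)
      + (dotv (\sum_(j <- S) w j *: v j) d - dotv (\sum_(j <- S) dw j *: v j) d).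
    rewrite !dotv_suml mulrBr !mulr_sumr -!sumrB -big_split /=.
    by apply: eq_bigr => j _; ring.
  by rewrite w1 dw1 wx dwx !subrr mulr0 addr0.
transitivity (weight_cost dw + weight_cost (fun j => w j - dw j)
  + 2 * \sum_(j <- S) (w j - dw j) * (c + dotv (v j) d)); last first.
  by rewrite cross mulr0 addr0.
rewrite /weight_cost mulr_sumr -!big_split big_seq [RHS]big_seq.
by apply: eq_bigr => j /p_gt0 pj; rewrite /dw /dual_weights /=; field; lra.
Qed.

Lemma min_weights_dual x :
  exists c d, is_min_weights x (dual_weights c d) /\
    forall w, is_min_weights x w -> {in S, w =1 dual_weights c d}.
Proof.
have [c [d dw_aff]] := dual_weights_exist x.
exists c, d; split.
  split=> // w w_aff; rewrite (weight_cost_pythagoras dw_aff w_aff) lerDl.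
  exact: weight_cost_ge0.
move=> w [w_aff w_min] j jS; apply/eqP; rewrite -subr_eq0; apply/eqP.
have gap0 : weight_cost (fun j => w j - dual_weights c d j) = 0.
  apply/eqP; rewrite eq_le weight_cost_ge0 andbT.
  by rewrite -(lerD2l (weight_cost (dual_weights c d))) addr0
    -(weight_cost_pythagoras dw_aff w_aff) w_min.
exact: (weight_cost_eq0 gap0 jS).
Qed.

End MinNormWeights.

Definition subspace_closed (R : fieldType) m (P : 'rV[R]_m -> Prop) : Prop :=
  [/\ P 0, forall u v, P u -> P v -> P (u + v) & forall c u, P u -> P (c *: u)].

Lemma subspace_row_basis (R : fieldType) m (P : 'rV[R]_m -> Prop) :
  subspace_closed P ->
  exists n (X : 'M[R]_(n, m)),
    [/\ row_free X, forall c, P (c *m X) & forall v, P v -> (v <= X)%MS].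
Proof.
move=> [P0 PD PZ].
suff [n [X [PX spanX]]] : exists n (X : 'M[R]_(n, m)),
    (forall c, P (c *m X)) /\ forall v, P v -> (v <= X)%MS.
  exists (\rank X), (row_base X); split; first exact: row_base_free.
    move=> c; have /submxP [c' ->] : (c *m row_base X <= X)%MS.
      by apply: submx_trans (submxMl c _) _; rewrite eq_row_base.
    exact: PX.
  by move=> v /spanX; rewrite eq_row_base.
suff grow d n (X : 'M[R]_(n, m)) : (forall c, P (c *m X)) ->
    (m - \rank X <= d)%N -> exists n (X : 'M[R]_(n, m)),
    (forall c, P (c *m X)) /\ forall v, P v -> (v <= X)%MS.
  by apply: (grow m 0 0) => [c|]; rewrite ?mulmx0 ?leq_subr.
elim: d n X => [|d IHd] n X PX rkX.
  exists n, X; split=> // v _; rewrite submx_full // /row_full eqn_leq.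
  by rewrite rank_leq_col; lia.
have [spanX|] := classic (forall v, P v -> (v <= X)%MS); first by exists n, X.
move=> /not_all_ex_not [v /(imply_to_and (P v))] [Pv /negP vX].
apply: (IHd _ (col_mx X v)).
  move=> c; rewrite -[c]hsubmxK mul_row_col [rsubmx c]mx11_scalar mul_scalar_mx.
  exact/PD/PZ.
have X_sub : (X <= col_mx X v)%MS by rewrite -addsmxE addsmxSl.
have := ltn_leqif (mxrank_leqif_sup X_sub).
rewrite col_mx_sub submx_refl (negbTE vX) /= => rk_lt.
by have := rank_leq_col (col_mx X v); lia.
Qed.

Lemma linear_term_eq0 (R : realFieldType) (Q L : R) :
  0 <= Q -> (forall s, 0 <= s ^+ 2 * Q - 2 * s * L) -> L = 0.
Proof.
move=> Q_ge0 /(_ (L / (Q + 1))).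
have -> : (L / (Q + 1)) ^+ 2 * Q - 2 * (L / (Q + 1)) * L
          = - (L ^+ 2 * (Q + 2)) / (Q + 1) ^+ 2 by field; lra.
have Q1_gt0 : 0 < Q + 1 by lra.
rewrite pmulr_lge0 ?invr_gt0 ?exprn_gt0 // oppr_ge0 pmulr_lle0; last lra.
by move=> L2_le0; apply/eqP; rewrite -sqrf_eq0 eq_le L2_le0 sqr_ge0.
Qed.

Section WeightedLeastSquares.
Variables (R : realFieldType) (m : nat) (wt : 'rV[R]_m).

Definition wdot (u v : 'rV[R]_m) : R := \sum_k wt 0 k * u 0 k * v 0 k.

Definition wsse (y u : 'rV[R]_m) : R := \sum_k wt 0 k * (y 0 k - u 0 k) ^+ 2.

Hypothesis wt_gt0 : forall k, 0 < wt 0 k.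

Lemma wdot_mx u v : (u *m diag_mx wt *m v^T) 0 0 = wdot u v.
Proof.
by rewrite mul_mx_diag mxE; apply: eq_bigr => k _; rewrite !mxE (mulrC (u 0 k)).
Qed.

Lemma wdotvv_eq0 u : wdot u u = 0 -> u = 0.
Proof.
move=> uu0; apply/rowP => k; rewrite mxE.
have terms_ge0 i : true -> 0 <= wt 0 i * u 0 i * u 0 i.
  by move=> _; rewrite -mulrA; apply: mulr_ge0; [exact: ltW | exact: sqr_ge0].
have /eqP := @psumr_eq0P _ _ _ _ terms_ge0 uu0 k isT.
by rewrite -mulrA mulf_eq0 gt_eqF //= mulf_eq0 orbb => /eqP.
Qed.

Lemma wsse_le_orth y u v : wdot (y - u) (u - v) = 0 -> wsse y u <= wsse y v.
Proof.
have -> : wsse y v = wsse y u + wsse u v + 2 * wdot (y - u) (u - v).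
  rewrite /wsse /wdot mulr_sumr -!big_split; apply: eq_bigr => k _.
  by rewrite /= !mxE; ring.
move=> ->; rewrite mulr0 addr0 lerDl sumr_ge0 // => k _.
by rewrite mulr_ge0 ?sqr_ge0 ?ltW.
Qed.

Lemma wsse_min_orth y u (P : 'rV[R]_m -> Prop) :
  subspace_closed P -> P u -> (forall v, P v -> wsse y u <= wsse y v) ->
  forall v, P v -> wdot (y - u) v = 0.
Proof.
move=> [_ PD PZ] Pu u_min v Pv.
have expand s : wsse y (u + s *: v) - wsse y u
                = s ^+ 2 * wsse 0 v - 2 * s * wdot (y - u) v.
  rewrite /wsse /wdot !mulr_sumr -!sumrB; apply: eq_bigr => k _.
  by rewrite /= !mxE; ring.
apply: (@linear_term_eq0 _ (wsse 0 v)) => [|s].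
  by rewrite sumr_ge0 // => k _; rewrite mulr_ge0 ?sqr_ge0 ?ltW.
by rewrite -expand subr_ge0 u_min //; apply/PD/PZ.
Qed.

Lemma wsse_min_exists y (P : 'rV[R]_m -> Prop) :
  subspace_closed P -> exists2 u, P u & forall v, P v -> wsse y u <= wsse y v.
Proof.
move=> Psub; have [n [X [X_free PX spanX]]] := subspace_row_basis Psub.
pose G := X *m diag_mx wt *m X^T.
have G_unit : G \in unitmx.
  rewrite -row_free_unit; apply: inj_row_free => c cG0.
  apply/eqP; rewrite -(mulmx_free_eq0 _ X_free); apply/eqP/wdotvv_eq0.
  by rewrite -wdot_mx trmx_mul !mulmxA -2!(mulmxA c) -/G cG0 !mul0mx mxE.
pose c := y *m diag_mx wt *m X^T *m invmx G.
exists (c *m X) => [|v /spanX /submxP [c' ->]]; first exact: PX.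
apply: wsse_le_orth; rewrite -wdot_mx -mulmxBl trmx_mul !mulmxA.
rewrite mulmxBl mulmxBl -2!(mulmxA c) -/G /c mulmxKV // subrr.
by rewrite !mul0mx mxE.
Qed.

End WeightedLeastSquares.

Lemma sum_pick (R : pzSemiRingType) (I : eqType) (s : seq I) (i0 : I) (F : I -> R) :
  uniq s -> i0 \in s -> \sum_(i <- s) (i == i0)%:R * F i = F i0.
Proof.
move=> s_uniq i0s; rewrite (eq_bigr (fun i => if i == i0 then F i else 0)).
  by rewrite -big_mkcond -big_filter filter_pred1_uniq // big_seq1.
by move=> i _; case: eqP; rewrite ?mul1r ?mul0r.
Qed.

Section OlsModel.
Variables (R : realFieldType) (r : nat) (A : seq nat) (T : nat) (pi : nat -> R).
Variables (theta psi : nat -> 'rV[R]_r).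

Definition ols_fit (al be : nat -> R) (ph nu : nat -> 'rV[R]_r)
    (tau : nat -> nat -> R) (a t : nat) : R :=
  al a + be t + dotv (theta a) (ph t) + dotv (nu a) (psi t)
  + (a <= t)%:R * tau a (t - a)%N.

Definition ols_resid (Y : nat -> nat -> R) al be ph nu tau (a t : nat) : R :=
  Y a t - ols_fit al be ph nu tau a t.

(* The cell (i, t) stands for cohort [nth 0 A i] in period [t.+1]. *)
Definition cell := ('I_(size A) * 'I_T)%type.

Definition cellvec (G : nat -> nat -> R) : 'rV[R]_#|{: cell}| :=
  \row_k G (nth 0%N A (enum_val k : cell).1) (enum_val k : cell).2.+1.

Lemma sum_cellvec (G : nat -> nat -> R) :
  \sum_k (cellvec G) 0 k = \sum_(a <- A) \sum_(1 <= t < T.+1) G a t.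
Proof.
under eq_bigr do rewrite mxE.
rewrite -(big_enum_val (fun i : cell => G (nth 0%N A i.1) i.2.+1)) /=.
rewrite -(pair_big predT predT
  (fun (i : 'I_(size A)) (j : 'I_T) => G (nth 0%N A i) j.+1)) /=.
rewrite (big_nth 0%N) big_mkord; apply: eq_bigr => i _.
by rewrite big_add1 /= big_mkord.
Qed.

Definition is_ols_fit (u : 'rV[R]_#|{: cell}|) : Prop :=
  exists al be ph nu tau, u = cellvec (ols_fit al be ph nu tau).

Lemma is_ols_fit_subspace : subspace_closed is_ols_fit.
Proof.
split.
- exists (fun _ => 0), (fun _ => 0), (fun _ => 0), (fun _ => 0), (fun _ _ => 0).
  by apply/rowP => k; rewrite !mxE /ols_fit dotv0r dotv0l; ring.
- move=> _ _ [al [be [ph [nu [tau ->]]]]] [al' [be' [ph' [nu' [tau' ->]]]]].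
  exists (al \+ al'), (be \+ be'), (ph \+ ph'), (nu \+ nu'),
    (fun a k => tau a k + tau' a k).
  by apply/rowP => k; rewrite !mxE /ols_fit /= dotvDr dotvDl; ring.
- move=> c _ [al [be [ph [nu [tau ->]]]]].
  exists (fun a => c * al a), (fun t => c * be t), (fun t => c *: ph t),
    (fun a => c *: nu a), (fun a k => c * tau a k).
  by apply/rowP => k; rewrite !mxE /ols_fit dotvZr dotvZl; ring.
Qed.

Lemma ols_objE Y al be ph nu tau :
  ols_obj A T pi Y theta psi al be ph nu tau =
  wsse (cellvec (fun a _ => pi a)) (cellvec Y) (cellvec (ols_fit al be ph nu tau)).
Proof.
rewrite /ols_obj -sum_cellvec; apply: eq_bigr => k _.
by rewrite !mxE /ols_fit; congr (_ * _ ^+ 2); ring.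
Qed.

Hypothesis pi_gt0 : {in A, forall a, 0 < pi a}.

Lemma cell_weights_gt0 k : 0 < (cellvec (fun a _ => pi a)) 0 k.
Proof. by rewrite mxE pi_gt0 // mem_nth. Qed.

Lemma ols_minimizer_exists Y :
  exists al be ph nu tau, is_ols_minimizer A T pi Y theta psi al be ph nu tau.
Proof.
have [_ [al [be [ph [nu [tau ->]]]]] fit_min] :=
  wsse_min_exists cell_weights_gt0 (cellvec Y) is_ols_fit_subspace.
exists al, be, ph, nu, tau => al' be' ph' nu' tau'.
by rewrite !ols_objE; apply: fit_min; exists al', be', ph', nu', tau'.
Qed.

Lemma ols_normal_eq Y al be ph nu tau :
  is_ols_minimizer A T pi Y theta psi al be ph nu tau ->
  forall al' be' ph' nu' tau',
  \sum_(a <- A) \sum_(1 <= t < T.+1)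
     pi a * ols_resid Y al be ph nu tau a t * ols_fit al' be' ph' nu' tau' a t = 0.
Proof.
move=> fit_min al' be' ph' nu' tau'.
have fit_u : is_ols_fit (cellvec (ols_fit al be ph nu tau)).
  by exists al, be, ph, nu, tau.
have fit_v : is_ols_fit (cellvec (ols_fit al' be' ph' nu' tau')).
  by exists al', be', ph', nu', tau'.
have u_min v : is_ols_fit v ->
    wsse (cellvec (fun a _ => pi a)) (cellvec Y) (cellvec (ols_fit al be ph nu tau))
    <= wsse (cellvec (fun a _ => pi a)) (cellvec Y) v.
  by move=> [al2 [be2 [ph2 [nu2 [tau2 ->]]]]]; rewrite -!ols_objE.
rewrite -sum_cellvec.
rewrite -[RHS](wsse_min_orth cell_weights_gt0 is_ols_fit_subspace fit_u u_min
  fit_v).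
by apply: eq_bigr => k _; rewrite !mxE.
Qed.

Hypothesis A_uniq : uniq A.

Variables (Y : nat -> nat -> R) (al be : nat -> R) (ph nu : nat -> 'rV[R]_r).
Variable tau : nat -> nat -> R.
Hypothesis fit_min : is_ols_minimizer A T pi Y theta psi al be ph nu tau.
Let e := ols_resid Y al be ph nu tau.

Lemma ols_resid_treated b t : b \in A -> (b <= t)%N -> (1 <= t <= T)%N -> e b t = 0.
Proof.
move=> bA bt tT.
have := ols_normal_eq fit_min (fun _ => 0) (fun _ => 0) (fun _ => 0) (fun _ => 0)
  (fun a m => ((a == b) && (m == t - b)%N)%:R).
rewrite (eq_bigr (fun a => (a == b)%:R *
                   \sum_(1 <= s < T.+1) (s == t)%:R * (pi a * e a s))) => [|a _].
  rewrite sum_pick // sum_pick ?iota_uniq ?mem_index_iota // => /eqP.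
  by rewrite mulf_eq0 gt_eqF ?pi_gt0 // => /eqP.
rewrite mulr_sumr; apply: eq_bigr => s _.
rewrite /ols_fit dotv0r dotv0l !add0r -natrM mulnb.
have -> : [&& a <= s, a == b & s - a == t - b]%N = (a == b) && (s == t).
  case: (eqVneq a b) => [->|_]; rewrite ?andbF //=.
  apply/idP/idP => [/andP [bs /eqP st]|/eqP ->]; first by apply/eqP; lia.
  by rewrite bt eqxx.
by rewrite -mulnb natrM /e; ring.
Qed.

Lemma ols_resid_cohort_orth j c d :
  j \in A -> \sum_(1 <= t < T.+1) e j t * (c + dotv (psi t) d) = 0.
Proof.
move=> jA.
have := ols_normal_eq fit_min (fun a => (a == j)%:R * c) (fun _ => 0) (fun _ => 0)
  (fun a => (a == j)%:R *: d) (fun _ _ => 0).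
rewrite (eq_bigr (fun a => (a == j)%:R * (pi a * \sum_(1 <= t < T.+1)
                               e a t * (c + dotv (psi t) d)))) => [|a _].
  by rewrite sum_pick // => /eqP; rewrite mulf_eq0 gt_eqF ?pi_gt0 // => /eqP.
rewrite !mulr_sumr; apply: eq_bigr => t _.
by rewrite /e /ols_fit dotv0r dotvZl dotvC; ring.
Qed.

Lemma ols_resid_period_orth t c d :
  (1 <= t <= T)%N -> \sum_(b <- A) pi b * e b t * (c + dotv (theta b) d) = 0.
Proof.
move=> tT.
rewrite -[RHS](ols_normal_eq fit_min (fun _ => 0) (fun s => (s == t)%:R * c)
  (fun s => (s == t)%:R *: d) (fun _ => 0) (fun _ _ => 0)).
apply: eq_bigr => a _.
rewrite -(@sum_pick _ _ (index_iota 1 T.+1) t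
  (fun s => pi a * e a s * (c + dotv (theta a) d))) ?iota_uniq ?mem_index_iota //.
by apply: eq_bigr => s _; rewrite /e /ols_fit dotv0l dotvZr; ring.
Qed.

End OlsModel.

Lemma mem_periods_before T p l :
  (l \in periods_before T p) = [&& 1 <= l, l <= T & l < p]%N.
Proof. by rewrite mem_filter mem_iota add1n ltnS andbC -andbA. Qed.

Section Contrast.
Variables (R : realFieldType) (r : nat) (A : seq nat) (T : nat).
Variables (w lam : nat -> R) (a p : nat).
Implicit Types g : nat -> nat -> R.

Definition cohort_gap g (s : nat) : R :=
  g a s - \sum_(j <- later_cohorts A a) w j * g j s.

Definition dd_contrast g : R :=
  cohort_gap g p - \sum_(l <- periods_before T p) lam l * cohort_gap g l.

Lemma cohort_gapD g1 g2 s :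
  cohort_gap (fun b t => g1 b t + g2 b t) s = cohort_gap g1 s + cohort_gap g2 s.
Proof.
rewrite /cohort_gap (eq_bigr (fun j => w j * g1 j s + w j * g2 j s)) => [|j _].
  by rewrite big_split /=; ring.
by rewrite mulrDr.
Qed.

Lemma dd_contrastD g1 g2 :
  dd_contrast (fun b t => g1 b t + g2 b t) = dd_contrast g1 + dd_contrast g2.
Proof.
rewrite /dd_contrast cohort_gapD (eq_bigr (fun l => lam l * cohort_gap g1 l
                                                  + lam l * cohort_gap g2 l)).
  by rewrite big_split /=; ring.
by move=> l _; rewrite cohort_gapD mulrDr.
Qed.

Lemma eq_dd_contrast g1 g2 :
  (forall b s, (b == a) || (b \in later_cohorts A a) ->
     (s == p) || (s \in periods_before T p) -> g1 b s = g2 b s) ->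
  dd_contrast g1 = dd_contrast g2.
Proof.
move=> g12; have gap12 s : (s == p) || (s \in periods_before T p) ->
    cohort_gap g1 s = cohort_gap g2 s.
  move=> sp; rewrite /cohort_gap g12 ?eqxx //; congr (_ - _).
  by rewrite big_seq [RHS]big_seq; apply: eq_bigr => j ja; rewrite g12 ?ja ?orbT.
rewrite /dd_contrast gap12 ?eqxx //; congr (_ - _).
by rewrite big_seq [RHS]big_seq; apply: eq_bigr => l lp; rewrite gap12 ?lp ?orbT.
Qed.

Lemma dd_contrast_pick x :
  dd_contrast (fun b s => ((b == a) && (s == p))%:R * x) = x.
Proof.
have later_ne j : j \in later_cohorts A a -> (j == a) = false.
  by rewrite mem_filter => /andP [aj _]; rewrite gtn_eqF.
have gap_pick s : cohort_gap (fun b s => ((b == a) && (s == p))%:R * x) s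
                  = (s == p)%:R * x.
  rewrite /cohort_gap eqxx big_seq big1 ?subr0 // => j /later_ne ->.
  by rewrite mul0r mulr0.
rewrite /dd_contrast gap_pick eqxx mul1r big_seq big1 ?subr0 // => l.
by rewrite mem_periods_before gap_pick => /and3P [_ _ /ltn_eqF ->]; rewrite mul0r mulr0.
Qed.

Variables (theta psi : nat -> 'rV[R]_r).
Variables (al be : nat -> R) (ph nu : nat -> 'rV[R]_r).
Let fe b s := al b + be s + dotv (theta b) (ph s) + dotv (nu b) (psi s).

Hypothesis w_affine : \sum_(j <- later_cohorts A a) w j = 1.
Hypothesis w_theta : \sum_(j <- later_cohorts A a) w j *: theta j = theta a.

Lemma cohort_gap_fixed_effects s :
  cohort_gap fe s = (al a - \sum_(j <- later_cohorts A a) w j * al j)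
    + dotv (nu a - \sum_(j <- later_cohorts A a) w j *: nu j) (psi s).
Proof.
rewrite /cohort_gap.
have -> : \sum_(j <- later_cohorts A a) w j * fe j s =
    \sum_(j <- later_cohorts A a) w j * al j
    + (\sum_(j <- later_cohorts A a) w j) * be s
    + dotv (\sum_(j <- later_cohorts A a) w j *: theta j) (ph s)
    + dotv (\sum_(j <- later_cohorts A a) w j *: nu j) (psi s).
  rewrite !dotv_suml mulr_suml -!big_split.
  by apply: eq_bigr => j _; rewrite /fe /=; ring.
by rewrite w_affine w_theta /fe dotvDl dotvNl; ring.
Qed.

Hypothesis lam_affine : \sum_(l <- periods_before T p) lam l = 1.
Hypothesis lam_psi : \sum_(l <- periods_before T p) lam l *: psi l = psi p.

Lemma dd_contrast_fixed_effects : dd_contrast fe = 0.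
Proof.
rewrite /dd_contrast; under eq_bigr do rewrite cohort_gap_fixed_effects.
rewrite cohort_gap_fixed_effects; set K := al a - _; set N := nu a - _.
rewrite (eq_bigr (fun l => K * lam l + lam l * dotv N (psi l))) => [|l _]; last by ring.
by rewrite big_split /= -mulr_sumr -dotv_sumr lam_affine lam_psi; ring.
Qed.

End Contrast.

Section ContrastResidual.
Variables (R : realFieldType) (r : nat) (A : seq nat) (T : nat) (pi : nat -> R).
Variables (theta psi : nat -> 'rV[R]_r) (e : nat -> nat -> R).
Hypothesis e_treated :
  forall b t, b \in A -> (b <= t)%N -> (1 <= t <= T)%N -> e b t = 0.
Hypothesis e_cohort : forall j c d, j \in A ->
  \sum_(1 <= t < T.+1) e j t * (c + dotv (psi t) d) = 0.
Hypothesis e_period : forall t c d, (1 <= t <= T)%N ->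
  \sum_(b <- A) pi b * e b t * (c + dotv (theta b) d) = 0.

Lemma later_cohorts_resid a w c d t :
  {in later_cohorts A a, forall j, w j = pi j * (c + dotv (theta j) d)} ->
  (1 <= t <= T)%N ->
  \sum_(j <- later_cohorts A a) w j * e j t
  = - \sum_(b <- A | (b <= a)%N) pi b * (c + dotv (theta b) d) * e b t.
Proof.
move=> w_dual tT.
transitivity (\sum_(b <- later_cohorts A a) pi b * e b t * (c + dotv (theta b) d)).
  by rewrite big_seq [RHS]big_seq; apply: eq_bigr => j /w_dual ->; ring.
apply/eqP; rewrite -addr_eq0; apply/eqP.
rewrite -[RHS](e_period c d tT) [RHS](bigID (fun b => (a < b)%N)) /=.
rewrite -[in RHS]big_filter; congr (_ + _).
by apply: eq_big => [b|b _]; [rewrite -leqNgt | ring].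
Qed.

Lemma periods_before_resid j p lam c d :
  j \in A -> (j <= p)%N ->
  {in periods_before T p, forall l, lam l = c + dotv (psi l) d} ->
  \sum_(l <- periods_before T p) lam l * e j l = 0.
Proof.
move=> jA jp lam_dual.
rewrite -[RHS](e_cohort c d jA) /index_iota subSS subn0.
rewrite [RHS](bigID (fun t => (t < p)%N)) /= -[in RHS]big_filter.
rewrite [X in _ = _ + X]big_seq_cond [X in _ = _ + X]big1 ?addr0; last first.
  move=> t /andP [+ tp]; rewrite mem_iota => tT.
  by rewrite e_treated ?mul0r //; lia.
by apply: eq_big_seq => l /lam_dual ->; rewrite mulrC.
Qed.

Lemma dd_contrast_resid a p w lam c d c' d' :
  a \in A -> (a <= p)%N -> (1 <= p <= T)%N ->
  {in later_cohorts A a, forall j, w j = pi j * (c + dotv (theta j) d)} ->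
  {in periods_before T p, forall l, lam l = c' + dotv (psi l) d'} ->
  dd_contrast A T w lam a p e = 0.
Proof.
move=> aA ap pT w_dual lam_dual.
have gap_p : cohort_gap A w a e p = 0.
  rewrite /cohort_gap (later_cohorts_resid w_dual pT) e_treated // opprK add0r.
  by rewrite big_seq_cond big1 // => b /andP [bA ba]; rewrite e_treated ?mulr0 //; lia.
have gap_l l : l \in periods_before T p -> cohort_gap A w a e l
    = e a l + \sum_(b <- A | (b <= a)%N) pi b * (c + dotv (theta b) d) * e b l.
  rewrite mem_periods_before => /and3P [l1 lT _].
  by rewrite /cohort_gap (later_cohorts_resid w_dual) ?l1 ?lT // opprK.
rewrite /dd_contrast gap_p sub0r; apply/eqP; rewrite oppr_eq0; apply/eqP.
rewrite (eq_big_seq (fun l => lam l * e a l + \sum_(b <- A | (b <= a)%N)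
           pi b * (c + dotv (theta b) d) * (lam l * e b l))) => [|l /gap_l ->].
  rewrite big_split /= (periods_before_resid aA ap lam_dual) add0r exchange_big /=.
  rewrite big_seq_cond big1 // => b /andP [bA ba].
  by rewrite -mulr_sumr (periods_before_resid bA _ lam_dual) ?mulr0 //; lia.
rewrite mulrDr mulr_sumr; congr (_ + _); apply: eq_bigr => b _; ring.
Qed.

End ContrastResidual.

Lemma omega_tilde_dual (R : realFieldType) r (A : seq nat) (pi : nat -> R)
    (theta : nat -> 'rV[R]_r) a astar :
  uniq A -> {in A, forall a, 0 < pi a} -> (a <= astar)%N ->
  affinely_spans (later_cohorts A astar) theta ->
  exists c d,
    affine_weights (later_cohorts A a) theta (theta a) (omega_tilde A pi theta a)
    /\ {in later_cohorts A a, omega_tilde A pi theta a =1 dual_weights pi theta c d}.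
Proof.
move=> A_uniq pi_gt0 a_le theta_spans.
have spans : affinely_spans (later_cohorts A a) theta.
  apply: affinely_spans_sub theta_spans; rewrite ?filter_uniq // => j.
  by rewrite !mem_filter => /andP [aj ->]; rewrite andbT (leq_ltn_trans a_le).
have pos : {in later_cohorts A a, forall j, 0 < pi j}.
  by move=> j; rewrite mem_filter => /andP [_ /pi_gt0].
have [c [d [dual_min dual_uniq]]] := min_weights_dual pos spans (theta a).
have tilde_min : is_omega_tilde A pi theta a (omega_tilde A pi theta a).
  exact: epsilon_spec (ex_intro (is_omega_tilde A pi theta a) _ dual_min).
by exists c, d; split; [exact: tilde_min.1 | exact: dual_uniq].
Qed.

Lemma lambda_tilde_dual (R : realFieldType) r T (psi : nat -> 'rV[R]_r) p tstar :
  (tstar <= p)%N -> affinely_spans (periods_before T tstar) psi ->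
  exists c d, affine_weights (periods_before T p) psi (psi p) (lambda_tilde T psi p)
    /\ {in periods_before T p, forall l, lambda_tilde T psi p l = c + dotv (psi l) d}.
Proof.
move=> tstar_le psi_spans.
have spans : affinely_spans (periods_before T p) psi.
  apply: affinely_spans_sub psi_spans; rewrite ?filter_uniq ?iota_uniq // => l.
  by rewrite !mem_filter => /andP [lt ->]; rewrite andbT (leq_trans lt).
have [c [d [dual_min dual_uniq]]] :=
  @min_weights_dual _ _ _ (fun _ => 1) _ (fun _ _ => ltr01) spans (psi p).
have min_iff w : is_min_weights (periods_before T p) (fun _ => 1) psi (psi p) w
                 <-> is_lambda_tilde T psi p w.
  have cost1 w' : weight_cost (periods_before T p) (fun _ => 1) w'
                  = \sum_(l <- periods_before T p) w' l ^+ 2.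
    by apply: eq_bigr => l _; rewrite divr1.
  by split=> -[w_aff w_min]; split=> // w' /w_min; rewrite !cost1.
have tilde_min : is_lambda_tilde T psi p (lambda_tilde T psi p).
  exact: epsilon_spec (ex_intro _ _ (proj1 (min_iff _) dual_min)).
exists c, d; split; first exact: tilde_min.1.
move=> l /(dual_uniq _ (proj2 (min_iff _) tilde_min)) ->.
by rewrite /dual_weights mul1r.
Qed.

Lemma seq_ols_stepE (R : realFieldType) r (A : seq nat) T (pi : nat -> R)
    (theta psi : nat -> 'rV[R]_r) st a k :
  seq_ols_step A T pi theta psi st (a, k) =
  let x := dd_contrast A T (omega_tilde A pi theta a) (lambda_tilde T psi (a + k))
             a (a + k) st.1 in
  (fun b s => if (b == a) && (s == a + k)%N then st.1 b s - x else st.1 b s,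
   fun b m => if (b == a) && (m == k) then x else st.2 b m).
Proof. by []. Qed.

Section SequentialOLS.
Variables (R : realFieldType) (r T : nat) (A : seq nat) (pi : nat -> R).
Variables (Y : nat -> nat -> R) (theta psi : nat -> 'rV[R]_r) (tstar astar : nat).
Hypothesis A_uniq : uniq A.
Hypothesis pi_gt0 : {in A, forall a, 0 < pi a}.
Hypothesis tstar_ge1 : (1 <= tstar)%N.
Hypothesis tstar_le_astar : (tstar <= astar)%N.
Hypothesis astar_leT : (astar <= T)%N.
Hypothesis theta_spans : affinely_spans (later_cohorts A astar) theta.
Hypothesis psi_spans : affinely_spans (periods_before T tstar) psi.
Variables (al be : nat -> R) (ph nu : nat -> 'rV[R]_r) (tau : nat -> nat -> R).
Hypothesis fit_min : is_ols_minimizer A T pi Y theta psi al be ph nu tau.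

Let fe b s := al b + be s + dotv (theta b) (ph s) + dotv (nu b) (psi s).
Let e := ols_resid theta psi Y al be ph nu tau.

(* [D b m] marks the cells (b, b + m) whose effect has already been estimated
   and subtracted from the data. *)
Definition seq_ols_inv (D : nat -> nat -> bool)
    (st : (nat -> nat -> R) * (nat -> nat -> R)) : Prop :=
  (forall b s, st.1 b s = if (b <= s)%N && D b (s - b)%N
                          then Y b s - tau b (s - b)%N else Y b s) /\
  (forall b m, D b m -> st.2 b m = tau b m).

Lemma seq_ols_inv_ext D1 D2 st : D1 =2 D2 -> seq_ols_inv D1 st -> seq_ols_inv D2 st.
Proof.
move=> D12 [inv_Y inv_tau].
by split=> b s; rewrite -D12; [apply: inv_Y | apply: inv_tau].
Qed.

Section Step.
Variables (D : nat -> nat -> bool) (st : (nat -> nat -> R) * (nat -> nat -> R)).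
Variables (a k : nat).
Hypothesis st_inv : seq_ols_inv D st.
Hypothesis undone : ~~ D a k.
Hypothesis prereq_done : forall b m, b \in A -> (a <= b)%N -> (m < k)%N ->
  (b + m <= a + k)%N -> D b m.

Lemma current_data_decomp b s : b \in A -> (a <= b)%N -> (s <= a + k)%N ->
  st.1 b s = fe b s + e b s + ((b == a) && (s == a + k)%N)%:R * tau a k.
Proof.
move=> bA ab sp; have [inv_Y _] := st_inv.
have Y_split : Y b s = fe b s + e b s + (b <= s)%:R * tau b (s - b)%N.
  by rewrite /e /ols_resid /ols_fit /fe; ring.
rewrite inv_Y Y_split; case: (leqP b s) => [bs|sb] /=; last first.
  have -> : (b == a) && (s == a + k)%N = false.
    by apply/negbTE/andP => -[/eqP ba /eqP sak]; lia.
  by rewrite /=; ring.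
have [[-> ->]|cell_ne] := eqVneq (b, s) (a, a + k)%N.
  by rewrite addKn (negbTE undone) !eqxx /=; ring.
have lt_k : (s - b < k)%N.
  by move: cell_ne; rewrite xpair_eqE negb_and => /orP [] /eqP; lia.
rewrite prereq_done //; last lia.
by rewrite -xpair_eqE (negbTE cell_ne) /=; ring.
Qed.

Hypothesis aA : a \in A.
Hypothesis tstar_le_a : (tstar <= a)%N.
Hypothesis ak_le_astar : (a + k <= astar)%N.

(* The contrast only reads cells (b, s) with a <= b and s <= a + k; all of them
   but (a, a + k) have already been corrected, and it annihilates both the
   fixed effects and the residuals. *)
Lemma seq_ols_step_estimate :
  dd_contrast A T (omega_tilde A pi theta a) (lambda_tilde T psi (a + k)) a (a + k) st.1
  = tau a k.
Proof.
have a_le_astar : (a <= astar)%N by lia.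
have tstar_le_p : (tstar <= a + k)%N by lia.
have [c [d [[w_aff w_theta] w_dual]]] :=
  omega_tilde_dual A_uniq pi_gt0 a_le_astar theta_spans.
have [c' [d' [[lam_aff lam_psi] lam_dual]]] := lambda_tilde_dual tstar_le_p psi_spans.
rewrite (@eq_dd_contrast _ _ _ _ _ _ _ _ (fun b s =>
           (fe b s + e b s) + ((b == a) && (s == a + k)%N)%:R * tau a k)).
  rewrite 2!dd_contrastD dd_contrast_fixed_effects // dd_contrast_pick.
  rewrite (dd_contrast_resid (ols_resid_treated pi_gt0 A_uniq fit_min)
    (ols_resid_cohort_orth pi_gt0 A_uniq fit_min)
    (ols_resid_period_orth pi_gt0 fit_min) aA _ _ w_dual lam_dual);
    [ring | exact: leq_addr | lia].
move=> b s hb hs; apply: current_data_decomp.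
- by case/orP: hb => [/eqP -> //|]; rewrite mem_filter => /andP [].
- by case/orP: hb => [/eqP -> //|]; rewrite mem_filter => /andP [/ltnW].
- by case/orP: hs => [/eqP -> //|]; rewrite mem_periods_before => /and3P [_ _ /ltnW].
Qed.

Lemma seq_ols_step_inv :
  seq_ols_inv (fun b m => D b m || (b == a) && (m == k))
              (seq_ols_step A T pi theta psi st (a, k)).
Proof.
have [inv_Y inv_tau] := st_inv.
rewrite seq_ols_stepE /= seq_ols_step_estimate; split=> b s /=.
  rewrite !inv_Y; case: (eqVneq b a) => [->|_]; rewrite ?orbF //=.
  have [->|ne_s] := eqVneq s (a + k)%N.
    by rewrite addKn leq_addr (negbTE undone) eqxx.
  case: (leqP a s) => // a_s /=.
  rewrite (_ : (s - a == k)%N = false) ?orbF //.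
  by apply/negbTE/eqP; move/eqP: ne_s; lia.
move=> /orP [Dbs|/andP [/eqP -> /eqP ->]]; last by rewrite !eqxx.
by case: ifP => [/andP [/eqP -> /eqP ->] //|_]; exact: inv_tau.
Qed.

End Step.

Lemma seq_ols_foldl_inv k (s : seq nat) D st :
  seq_ols_inv D st -> uniq s ->
  {in s, forall a, [/\ a \in A, tstar <= a & a + k <= astar]%N} ->
  {in s, forall a, ~~ D a k} ->
  (forall a b m, a \in s -> b \in A -> (a <= b)%N -> (m < k)%N ->
     (b + m <= a + k)%N -> D b m) ->
  seq_ols_inv (fun b m => D b m || (m == k) && (b \in s))
              (foldl (seq_ols_step A T pi theta psi) st [seq (a, k) | a <- s]).
Proof.
elim: s D st => [|a s IH] D st st_inv /= s_uniq s_range undone prereq_done.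
  by apply: seq_ols_inv_ext st_inv => b m; rewrite andbF orbF.
case/andP: s_uniq => a_notin_s s_uniq.
have [aA ta ak] := s_range a (mem_head a s).
have step_inv := seq_ols_step_inv st_inv (undone a (mem_head a s))
  (fun b m => prereq_done a b m (mem_head a s)) aA ta ak.
have s_range' : {in s, forall a', [/\ a' \in A, tstar <= a' & a' + k <= astar]%N}.
  by move=> a' a's; apply: s_range; rewrite in_cons a's orbT.
have undone' : {in s, forall a', ~~ (D a' k || (a' == a) && (k == k))}.
  move=> a' a's; have a'_ne_a : a' != a by apply: contraNneq a_notin_s => <-.
  by rewrite negb_or undone ?in_cons ?a's ?orbT //= (negbTE a'_ne_a).
apply: seq_ols_inv_ext (IH _ _ step_inv s_uniq s_range' undone' _) => [b m|].
  by rewrite in_cons andb_orr orbA (andbC (b == a)).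
by move=> a' b m a's *; rewrite (prereq_done a') // in_cons a's orbT.
Qed.

Definition cohorts_at (k : nat) : seq nat :=
  [seq a <- iota tstar (astar - k - tstar).+1 | a \in A].

Lemma seq_ols_blocks_inv n : (n <= (astar - tstar).+1)%N ->
  seq_ols_inv (fun b m => [&& m < n, b \in A, tstar <= b & b + m <= astar]%N)
    (foldl (seq_ols_step A T pi theta psi) (Y, fun _ _ => 0)
       (flatten [seq [seq (a, k) | a <- cohorts_at k] | k <- iota 0 n])).
Proof.
elim: n => [|n IH] n_le; first by split=> [b s|b m] //=; rewrite andbF.
rewrite -addn1 iotaD map_cat flatten_cat foldl_cat add0n /= cats0.
have mem_block (a : nat) :
    (a \in cohorts_at n) = [&& a \in A, tstar <= a & a + n <= astar]%N.
  by rewrite mem_filter mem_iota andbC; case: (a \in A) => //=; apply/idP/idP; lia.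
apply: seq_ols_inv_ext (seq_ols_foldl_inv (IH (ltnW n_le)) _ _ _ _).
- move=> b m; rewrite mem_block; case: (b \in A); rewrite /= ?andbF ?orbF //.
  by apply/idP/idP; lia.
- by rewrite filter_uniq ?iota_uniq.
- by move=> a; rewrite mem_block => /and3P [].
- by move=> a _; rewrite ltnn.
move=> a b m; rewrite mem_block => /and3P [_ ta ak] bA ab mn bm.
by rewrite mn bA /=; apply/andP; split; lia.
Qed.

End SequentialOLS.

Theorem proposition1 (R : realFieldType) (r T : nat) (A : seq nat)
  (pi : nat -> R) (Y : nat -> nat -> R) (theta psi : nat -> 'rV[R]_r)
  (tstar astar : nat) :
  uniq A ->
  (forall a, a \in A -> (1 <= a <= T.+1)%N) ->
  (forall a, a \in A -> 0 < pi a) ->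
  (1 <= tstar)%N -> (tstar <= astar)%N -> (astar <= T)%N ->
  affinely_spans (later_cohorts A astar) theta ->
  affinely_spans (periods_before T tstar) psi ->
  (exists (al be : nat -> R) (ph nu : nat -> 'rV[R]_r) (tau : nat -> nat -> R),
      is_ols_minimizer A T pi Y theta psi al be ph nu tau) /\
  (forall (al be : nat -> R) (ph nu : nat -> 'rV[R]_r) (tau : nat -> nat -> R),
      is_ols_minimizer A T pi Y theta psi al be ph nu tau ->
      forall a k : nat, a \in A -> (tstar <= a)%N -> (a + k <= astar)%N ->
        tau a k = seq_ols A T pi Y theta psi tstar astar a k).
Proof.
move=> A_uniq _ pi_gt0 tstar_ge1 tstar_le_astar astar_leT theta_spans psi_spans.
split; first exact: ols_minimizer_exists.
move=> al be ph nu tau fit_min a k aA ta ak.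
have [_ inv_tau] := seq_ols_blocks_inv A_uniq pi_gt0 tstar_ge1 tstar_le_astar astar_leT
  theta_spans psi_spans fit_min (leqnn _).
by rewrite /seq_ols inv_tau // aA ta ak !andbT ltnS; lia.
Qed.
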